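(* $\mathcal{L}$ is closed under weak limits: if $\mu_n\in\mathcal{L}$ and $\mu_n\to\mu$ weakly for a probability measure $\mu$ on $\mathbb{R}$, then $\mu\in\mathcal{L}$.
   Context: For a probability measure $\mu$ on $\mathbb{R}$, $G_\mu(z)=\int\frac{d\mu(x)}{z-x}$ and $F_\mu=1/G_\mu$ on the upper half-plane $\mathbb{C}^+$. $\mathcal{L}$ is the set of probability measures $\mu$ on $\mathbb{R}$ with $F_\mu(z+2\pi)=F_\mu(z)+2\pi$ for all $z\in\mathbb{C}^+$. *)

From HB Require Import structures.
From mathcomp Require Import all_boot all_order all_algebra.
From mathcomp Require Import all_classical all_reals all_analysis.
From mathcomp Require Import complex.
Set Implicit Arguments. Unset Strict Implicit. Unset Printing Implicit Defensive.
Import Order.TTheory GRing.Theory Num.Theory.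
Import numFieldNormedType.Exports.
Local Open Scope classical_set_scope.
Local Open Scope ring_scope.
Local Open Scope complex_scope.

(* Probability measures on R are [probability R R] (Borel sigma-algebra on R). *)

(* Cauchy transform G_mu(z) = \int dmu(x)/(z-x); the complex integral is the
   integral of the real part plus i times the integral of the imaginary part. *)
Definition cauchyG (R : realType) (mu : probability R R) (z : R[i]) : R[i] :=
  (Rintegral mu setT (fun x : R => complex.Re (z - x%:C)^-1))
  +i* (Rintegral mu setT (fun x : R => complex.Im (z - x%:C)^-1)).

Definition cauchyF (R : realType) (mu : probability R R) (z : R[i]) : R[i] :=
  (cauchyG mu z)^-1.

Definition classL (R : realType) (mu : probability R R) : Prop :=
  forall z : R[i], 0 < complex.Im z ->
    cauchyF mu (z + (2 * pi)%:C) = cauchyF mu z + (2 * pi)%:C.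

Definition weak_cvg (R : realType) (mu_ : nat -> probability R R)
    (mu : probability R R) : Prop :=
  forall f : R -> R, continuous f -> (exists M : R, forall x, `|f x| <= M) ->
    (fun n => Rintegral (mu_ n) setT f) @ \oo --> Rintegral mu setT f.

From HB Require Import structures.
From mathcomp Require Import all_boot all_order all_algebra.
From mathcomp Require Import all_classical all_reals all_analysis.
From mathcomp Require Import complex.
From mathcomp Require Import lra measurable_realfun.
Set Implicit Arguments. Unset Strict Implicit. Unset Printing Implicit Defensive.
Import Order.TTheory GRing.Theory Num.Theory.
Import numFieldNormedType.Exports.
Local Open Scope classical_set_scope.
Local Open Scope ring_scope.
Local Open Scope complex_scope.

(* For Im z > 0 the real and imaginary parts of x |-> 1/(z - x) are bounded
   continuous functions, so weak convergence gives G_{mu_n}(z) -> G_mu(z).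
   Since Im G_mu(z) < 0, the limit is nonzero, hence F_{mu_n}(z) -> F_mu(z)
   for every z in the upper half-plane, and the identity
   F(z + 2 pi) = F(z) + 2 pi passes to the limit. *)

Section ProbabilityIntegral.
Context d (T : measurableType d) (R : realType).

Lemma Rintegral_gt0 (P : probability T R) (f : T -> R) (M : R) :
  measurable_fun setT f -> (forall x, 0 < f x) -> (forall x, f x <= M) ->
  0 < \int[P]_x f x.
Proof.
move=> mf f_gt0 f_leM.
have mfE : measurable_fun setT (EFin \o f) by exact/measurable_EFinP.
set I := (\int[P]_x (f x)%:E)%E.
have I_ge0 : (0 <= I)%E by apply: integral_ge0 => x _; rewrite lee_fin ltW.
have I_leM : (I <= M%:E)%E.
  apply: (@le_trans _ _ (\int[P]_x (cst M%:E) x)%E).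
    by apply: ge0_le_integral => // x _; rewrite lee_fin ?(ltW (f_gt0 x)).
  rewrite integral_cst // (_ : (M%:E * _)%E = M%:E) // -[RHS]mule1.
  by congr (_ * _)%E; exact: probability_setT.
have I_neq0 : I != 0%E.
  apply/eqP => I0.
  have : (\int[P]_x `|(EFin \o f) x|)%E = 0%E.
    by rewrite -I0; apply: eq_integral => x _ /=; rewrite gtr0_norm.
  move/(ae_eq_integral_abs P measurableT mfE) => [N [mN PN0 subN]].
  have : (P setT <= P N)%E.
    apply: le_measure; rewrite ?inE // => x _; apply: subN => /=.
    by move=> /(_ Logic.I) /= /eqP; rewrite eqe gt_eqF.
  by rewrite PN0 probability_setT lee_fin ler10.
move: I_ge0 I_leM I_neq0; rewrite /Rintegral -/I.
by case: I => [r||] //=; rewrite !lee_fin eqe lt_def => -> _ ->.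
Qed.

End ProbabilityIntegral.

Section ComplexLimits.
Variable R : realType.

(* R[i] carries no topology in the library: convergence in C is componentwise. *)
Definition cvgC (u : nat -> R[i]) (w : R[i]) : Prop :=
  (fun n => complex.Re (u n)) @ \oo --> complex.Re w /\
  (fun n => complex.Im (u n)) @ \oo --> complex.Im w.

Lemma complex_ReIm (w : R[i]) : w = complex.Re w +i* complex.Im w.
Proof. by case: w. Qed.

Lemma cvgC_unique (u : nat -> R[i]) (w w' : R[i]) :
  cvgC u w -> cvgC u w' -> w = w'.
Proof.
case: w w' => a b [a' b'] [Ra Ib] [Ra' Ib'].
have sep := @Rhausdorff R.
have /= -> := cvg_unique sep Ra Ra'.
by have /= -> := cvg_unique sep Ib Ib'.
Qed.

Lemma cvgC_addr (u : nat -> R[i]) (w c : R[i]) :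
  cvgC u w -> cvgC (fun n => u n + c) (w + c).
Proof.
case: w c => a b [c1 c2] [Ru Iu].
split=> /=; under eq_fun do rewrite [u _]complex_ReIm /=.
  all: by apply: cvgD => //; exact: cvg_cst.
Qed.

Lemma cvgC_inv (u : nat -> R[i]) (w : R[i]) :
  cvgC u w -> w != 0 -> cvgC (fun n => (u n)^-1) w^-1.
Proof.
case: w => a b [Ru Iu] w_neq0.
pose nu n := complex.Re (u n) ^+ 2 + complex.Im (u n) ^+ 2.
have nu_cvg : nu @ \oo --> a ^+ 2 + b ^+ 2 by rewrite !expr2; apply: cvgD; apply: cvgM.
have norm_neq0 : a ^+ 2 + b ^+ 2 != 0.
  rewrite paddr_eq0 ?sqr_ge0 // !sqrf_eq0; apply: contra w_neq0 => /andP[/eqP-> /eqP->].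
  by rewrite eq_complex /= !eqxx.
have nuV_cvg : (fun n => (nu n)^-1) @ \oo --> (a ^+ 2 + b ^+ 2)^-1 by exact: cvgV.
split; under eq_fun do rewrite [u _]complex_ReIm /=.
- exact: cvgM Ru nuV_cvg.
- by apply: cvgN; exact: cvgM Iu nuV_cvg.
Qed.

End ComplexLimits.

Section CauchyKernel.
Variable R : realType.
Implicit Types (z : R[i]) (x : R).

Definition cauchy_den z x : R := (complex.Re z - x) ^+ 2 + complex.Im z ^+ 2.

Lemma Re_cauchy_kernel z x :
  complex.Re (z - x%:C)^-1 = (complex.Re z - x) / cauchy_den z x.
Proof. by case: z => a b; rewrite /= subr0. Qed.

Lemma Im_cauchy_kernel z x :
  complex.Im (z - x%:C)^-1 = - (complex.Im z / cauchy_den z x).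
Proof. by case: z => a b; rewrite /= subr0. Qed.

Lemma cauchy_den_gt0 z x : 0 < complex.Im z -> 0 < cauchy_den z x.
Proof. by move=> z_gt0; apply: ltr_wpDl; [exact: sqr_ge0 | exact: exprn_gt0]. Qed.

Lemma continuous_cauchy_den z : continuous (cauchy_den z).
Proof.
have -> : cauchy_den z =
    ((cst (complex.Re z) - id) \* (cst (complex.Re z) - id) + cst (complex.Im z ^+ 2))%R.
  by apply/funext => x; rewrite /cauchy_den expr2.
move=> x; apply: continuousD; last exact: cvg_cst.
by apply: continuousM; apply: continuousB; (exact: cvg_cst || exact: cvg_id).
Qed.

Lemma continuous_div_cauchy_den z (p : R -> R) : 0 < complex.Im z ->
  continuous p -> continuous (fun x => p x / cauchy_den z x).
Proof.
move=> z_gt0 cp x.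
rewrite (_ : (fun x => _) = p \* (fun x => (cauchy_den z x)^-1))%R //.
apply: continuousM; first exact: cp.
by apply: continuousV; [rewrite gt_eqF // cauchy_den_gt0 | exact: continuous_cauchy_den].
Qed.

Lemma Im_div_cauchy_den_le z x : 0 < complex.Im z ->
  complex.Im z / cauchy_den z x <= (complex.Im z)^-1.
Proof.
move=> z_gt0; rewrite ler_pdivrMr ?cauchy_den_gt0 // ler_pdivlMl //.
by rewrite /cauchy_den; have := sqr_ge0 (complex.Re z - x); nra.
Qed.

Lemma norm_Re_cauchy_kernel_le z x : 0 < complex.Im z ->
  `|complex.Re (z - x%:C)^-1| <= (complex.Im z)^-1.
Proof.
move=> z_gt0; have den_gt0 := cauchy_den_gt0 x z_gt0.
rewrite Re_cauchy_kernel normrM normfV (gtr0_norm den_gt0).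
rewrite ler_pdivrMr // ler_pdivlMl // /cauchy_den.
rewrite -(real_normK (num_real (complex.Re z - x))).
by have := normr_ge0 (complex.Re z - x); nra.
Qed.

Lemma norm_Im_cauchy_kernel_le z x : 0 < complex.Im z ->
  `|complex.Im (z - x%:C)^-1| <= (complex.Im z)^-1.
Proof.
move=> z_gt0; rewrite Im_cauchy_kernel normrN ger0_norm; last first.
  by rewrite divr_ge0 ?ltW ?cauchy_den_gt0.
exact: Im_div_cauchy_den_le.
Qed.

Lemma continuous_Re_cauchy_kernel z : 0 < complex.Im z ->
  continuous (fun x => complex.Re (z - x%:C)^-1).
Proof.
move=> z_gt0; under eq_fun do rewrite Re_cauchy_kernel.
apply: continuous_div_cauchy_den => // x.
by apply: continuousB; [exact: cvg_cst | exact: cvg_id].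
Qed.

Lemma continuous_Im_cauchy_kernel z : 0 < complex.Im z ->
  continuous (fun x => complex.Im (z - x%:C)^-1).
Proof.
move=> z_gt0; under eq_fun do rewrite Im_cauchy_kernel -mulNr.
by apply: continuous_div_cauchy_den => // x; exact: cvg_cst.
Qed.

End CauchyKernel.

Section CauchyTransform.
Variable R : realType.
Implicit Types (z : R[i]) (mu : probability R R).

Lemma Im_cauchyG_lt0 mu z : 0 < complex.Im z -> complex.Im (cauchyG mu z) < 0.
Proof.
move=> z_gt0; pose g x := complex.Im z / cauchy_den z x.
have g_gt0 x : 0 < g x by rewrite divr_gt0 // cauchy_den_gt0.
have cg : continuous g by apply: continuous_div_cauchy_den => // x; exact: cvg_cst.
rewrite /= /Rintegral (eq_integral (fun x => - (g x)%:E)%E); last first.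
  by move=> x _; rewrite Im_cauchy_kernel EFinN.
rewrite integral_ge0N; last by move=> x _; rewrite lee_fin ltW.
rewrite fineN oppr_lt0.
exact: Rintegral_gt0 (continuous_measurable_fun cg) g_gt0
  (fun x => Im_div_cauchy_den_le x z_gt0).
Qed.

Lemma cvgC_cauchyG (mu_ : nat -> probability R R) mu z :
  weak_cvg mu_ mu -> 0 < complex.Im z ->
  cvgC (fun n => cauchyG (mu_ n) z) (cauchyG mu z).
Proof.
move=> mu_cvg z_gt0; split; apply: mu_cvg.
- exact: continuous_Re_cauchy_kernel.
- by exists (complex.Im z)^-1 => x; exact: norm_Re_cauchy_kernel_le.
- exact: continuous_Im_cauchy_kernel.
- by exists (complex.Im z)^-1 => x; exact: norm_Im_cauchy_kernel_le.
Qed.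

Lemma cvgC_cauchyF (mu_ : nat -> probability R R) mu z :
  weak_cvg mu_ mu -> 0 < complex.Im z ->
  cvgC (fun n => cauchyF (mu_ n) z) (cauchyF mu z).
Proof.
move=> mu_cvg z_gt0; apply: cvgC_inv; first exact: cvgC_cauchyG.
apply: contraTneq (Im_cauchyG_lt0 mu z_gt0) => ->.
by rewrite ltxx.
Qed.

End CauchyTransform.

Theorem proposition3p14 (R : realType) (mu_ : nat -> probability R R)
    (mu : probability R R) :
  (forall n, classL (mu_ n)) -> weak_cvg mu_ mu -> classL mu.
Proof.
move=> mu_L mu_cvg z z_gt0; set c := (2 * pi)%:C.
have shift_gt0 : 0 < complex.Im (z + c).
  by rewrite [z]complex_ReIm /c /= addr0.
apply: cvgC_unique (cvgC_cauchyF mu_cvg shift_gt0) _.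
have -> : (fun n => cauchyF (mu_ n) (z + c)) = (fun n => cauchyF (mu_ n) z + c).
  by apply/funext => n; exact: mu_L.
exact: cvgC_addr (cvgC_cauchyF mu_cvg z_gt0).
Qed.
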